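(* For every $\varepsilon>0$ there exist a graph $G$ and an induced subgraph $H$ of $G$ such that $\operatorname{cdim}(H)>0$ and \[ \frac{\operatorname{cdim}(G)}{\operatorname{cdim}(H)}\leq \varepsilon. \]
   Context: All graphs are finite, simple, undirected and nonempty. For distinct vertices $v,w$, $\kappa(v,w)$ is the maximum number of internally vertex-disjoint $v$–$w$ paths (an edge $vw$ counts as one such path); $\kappa(v,v)=\infty$. For an ordered vertex set $W=(w_1,\ldots,w_k)$, $r_G(v,W)=[\kappa(v,w_1),\ldots,\kappa(v,w_k)]$. $W$ is resolving if $r_G(v_1,W)=r_G(v_2,W)$ implies $v_1=v_2$. The connectivity dimension $\operatorname{cdim}(G)$ is the minimum cardinality of a resolving set. *)

From HB Require Import structures.
From mathcomp Require Import all_boot.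
From mathcomp Require Import boolp.
Set Implicit Arguments. Unset Strict Implicit. Unset Printing Implicit Defensive.

Record sgraph := SGraph {
  vert :> finType;
  adj : rel vert;
  adj_sym : symmetric adj;
  adj_irr : irreflexive adj;
  vert_nonempty : 0 < #|vert| }.

Section Conn.
Variable G : sgraph.

Definition is_vw_path (v w : G) (p : seq G) : Prop :=
  exists2 rest : seq G, p = v :: rest &
    [/\ path (@adj G) v rest, last v rest = w & uniq p].

Definition interior (v w : G) (p : seq G) : seq G :=
  [seq x <- p | (x != v) && (x != w)].

Definition disjoint_paths (v w : G) (ps : seq (seq G)) : Prop :=
  [/\ uniq ps, (forall p, p \in ps -> is_vw_path v w p) &
      pairwise (fun p q => all (fun x => x \notin interior v w q)
                               (interior v w p)) ps].

(* kappa(v,w) for v <> w : the maximum number of internally vertex-disjoint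
   v-w paths; any such family has at most #|G| - 1 members, so the bound
   #|G|.+2 on the range is not restrictive. *)
Definition kappa_fin (v w : G) : nat :=
  \max_(k < #|G|.+2 | `[< exists ps, disjoint_paths v w ps /\ size ps = k >]) k.

(* kappa with value None standing for infinity (kappa(v,v) = oo). *)
Definition kappa (v w : G) : option nat :=
  if v == w then None else Some (kappa_fin v w).

(* W resolves G : equal connectivity representations force equality.
   (The ordering of W is irrelevant, so W is taken as a set.) *)
Definition resolving (W : {set G}) : Prop :=
  forall v1 v2 : G, (forall w, w \in W -> kappa v1 w = kappa v2 w) -> v1 = v2.

(* connectivity dimension: minimum cardinality of a resolving set
   ([set: G] is always resolving, so the default #|G| is harmless) *)
Definition cdim : nat :=
  \big[minn/#|G|]_(W : {set G} | `[< resolving W >]) #|W|.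

End Conn.

Definition induced_sub (H G : sgraph) : Prop :=
  exists f : H -> G, injective f /\ forall x y : H, adj x y = adj (f x) (f y).

(** The graph [threshold_graph k] has vertices [0..2k]: [0] is adjacent to
    everything and [i, j > 0] are adjacent iff [i + j > 2k].  Since [0] is
    universal, [kappa(v, 0)] is the degree of [v], which is [v + 1] for
    [v <= k] and [v] for [v > k]; so [{0, k+1}] resolves the graph and its
    connectivity dimension is at most 2.  Yet the vertices [1..k] induce an
    edgeless graph, and in an edgeless graph all connectivities between
    distinct vertices vanish, so a resolving set misses at most one vertex.
    The ratio is thus at most [2/(k-1)]. *)
From Pilot Require Import Defs.
From mathcomp Require Import all_boot.
From Stdlib Require Import Reals.
From mathcomp Require Import order zify boolp.
From Stdlib Require Import Lra.
Set Implicit Arguments. Unset Strict Implicit. Unset Printing Implicit Defensive.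

Lemma pairwise_mem2 (T : eqType) (r : rel T) s x y :
  pairwise r s -> x \in s -> y \in s -> x != y -> r x y \/ r y x.
Proof.
elim: s => //= a s IH /andP [ras rs].
rewrite !in_cons => /orP [/eqP ->|xs] /orP [/eqP ->|ys] nxy.
- by rewrite eqxx in nxy.
- by left; apply: (allP ras).
- by right; apply: (allP ras).
- exact: IH.
Qed.

Lemma uniq_pairwise_in (T : eqType) (r : rel T) s :
  {in s &, forall x y, x != y -> r x y} -> uniq s -> pairwise r s.
Proof.
elim: s => //= a s IH rs /andP [as_ us]; apply/andP; split.
  apply/allP => y ys; apply: rs; rewrite ?in_cons ?eqxx ?ys ?orbT //.
  by apply: contraNneq as_ => ->.
by apply: IH => // x y xs ys; apply: rs; rewrite in_cons ?xs ?ys orbT.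
Qed.

Lemma card_ord_count n (P : pred nat) : #|[set j : 'I_n | P j]| = count P (iota 0 n).
Proof.
rewrite -val_enum_ord count_map cardE /enum_mem size_filter -enumT.
by rewrite (@eq_filter _ _ predT) // filter_predT; apply: eq_count => j; rewrite /= inE.
Qed.

Lemma count_iota_sum_gt m i :
  i <= m.+1 -> count (fun j => m < i + j) (iota 0 m.+1) = i.
Proof.
move=> im; rewrite -[in iota 0 _](subnK im) iotaD add0n count_cat.
rewrite (@eq_in_count _ _ pred0) ?count_pred0; last first.
  by move=> j; rewrite mem_iota /=; lia.
rewrite (@eq_in_count _ _ predT) ?count_predT ?size_iota //.
by move=> j; rewrite mem_iota /=; lia.
Qed.

Lemma cdim_leq (G : sgraph) (W : {set G}) : resolving W -> cdim G <= #|W|.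
Proof.
move=> resW; rewrite /cdim -minEnat -leEnat.
by apply: Order.TotalTheory.bigmin_le_cond; apply/asboolP.
Qed.

Lemma leq_cdim (G : sgraph) n :
  n <= #|G| -> (forall W : {set G}, resolving W -> n <= #|W|) -> n <= cdim G.
Proof.
move=> nG nW; rewrite /cdim -minEnat -leEnat; apply: Order.POrderTheory.le_bigmin => // W.
by move/asboolP/nW.
Qed.

Section Connectivity.
Variable G : sgraph.
Implicit Types (v w x z : G) (p : seq G).

Definition nbh v : {set G} := [set x | adj v x].

Definition universal z := forall x, x != z -> adj x z.

Lemma kappa_eq_None v w : (kappa v w == None) = (v == w).
Proof. by rewrite /kappa; case: (v == w). Qed.

Lemma vw_pathE v w p : v != w -> is_vw_path v w p ->
  exists x r, p = v :: x :: r /\ adj v x.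
Proof.
move=> vw [[|x r] -> [pth lst _]].
  by move: lst vw => /= ->; rewrite eqxx.
by case/andP: pth => vx _; exists x, r.
Qed.

Lemma vw_path_adj v w r : is_vw_path v w [:: v, w & r] -> r = [::].
Proof.
case=> _ [<-] [_ lst /and3P [_ wr _]]; case: r lst wr => //= y s lst.
by rewrite -lst mem_last.
Qed.

Lemma disjoint_paths_second_inj v w ps : v != w -> disjoint_paths v w ps ->
  {in ps &, injective (fun p => nth v p 1)}.
Proof.
move=> vw [ups pths dps] p q pps qps.
have pvw := pths p pps; have qvw := pths q qps.
have [x [r [pE vx]]] := vw_pathE vw pvw; have [x' [r' [qE _]]] := vw_pathE vw qvw.
rewrite pE qE /= => xx'; subst p q x'; apply/eqP; apply: contraT => pq.
have [xw|xw] := eqVneq x w.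
  move: pvw qvw pq; rewrite xw => pvw qvw.
  by rewrite (vw_path_adj pvw) (vw_path_adj qvw) eqxx.
have xv : x != v by apply: contraTneq vx => ->; rewrite adj_irr.
have xint (s : seq G) : x \in Defs.interior v w [:: v, x & s].
  by rewrite /interior mem_filter xv xw !in_cons eqxx orbT.
have [] := pairwise_mem2 dps pps qps pq => /allP /(_ x (xint _)); by rewrite xint.
Qed.

Lemma kappa_fin_leq_deg v w : v != w -> kappa_fin v w <= #|nbh v|.
Proof.
move=> vw; apply/bigmax_leqP => k /asboolP [ps [dps <-]].
have second_nbh p : p \in ps -> nth v p 1 \in nbh v.
  case: dps => _ pths _ /pths /(vw_pathE vw) [x [r [-> vx]]].
  by rewrite inE.
rewrite -(size_map (fun p => nth v p 1)) cardE; apply: uniq_leq_size.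
  case: (dps) => ups _ _; rewrite map_inj_in_uniq //.
  exact: disjoint_paths_second_inj vw dps.
by move=> y /mapP [p pps ->]; rewrite mem_enum; apply: second_nbh.
Qed.

Lemma deg_leq_kappa_fin v z : v != z -> universal z -> #|nbh v| <= kappa_fin v z.
Proof.
move=> vz univ.
pose route x := if x == z then [:: v; z] else [:: v; x; z].
pose ps := map route (enum (nbh v)).
have route_inj : injective route.
  have route_second x : nth v (route x) 1 = x by rewrite /route; case: eqP.
  by move=> x y xy; rewrite -[x]route_second xy route_second.
have nbh_neq x : x \in nbh v -> x != v.
  by rewrite inE => vx; apply: contraTneq vx => ->; rewrite adj_irr.
have interior_route x : x \in nbh v ->
    Defs.interior v z (route x) = if x == z then [::] else [:: x].
  move=> /nbh_neq xv; rewrite /route /interior.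
  by have [xz|xz] := eqVneq x z; rewrite /= !eqxx ?xv ?xz ?andbF.
have dps : disjoint_paths v z ps.
  split; first by rewrite map_inj_uniq // enum_uniq.
    move=> p /mapP [x]; rewrite mem_enum => xn ->.
    have xv := nbh_neq x xn; rewrite inE in xn; rewrite /route.
    have [xz|xz] := eqVneq x z.
      exists [:: z] => //; split=> //=; first by rewrite -xz xn.
      by rewrite inE vz.
    exists [:: x; z] => //; split=> //=; first by rewrite xn univ.
    by rewrite !inE negb_or eq_sym xv vz xz.
  rewrite pairwise_map; apply: uniq_pairwise_in (enum_uniq _) => x y.
  rewrite !mem_enum => xn yn xy /=; rewrite (interior_route _ xn) (interior_route _ yn).
  by case: (x == z); case: (y == z) => //=; rewrite inE andbT.
have lt_card : #|nbh v| < #|G|.+2 by rewrite ltnS leqW // max_card.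
apply: (@leq_bigmax_cond _ _ _ (Ordinal lt_card)); apply/asboolP.
by exists ps; rewrite size_map -cardE.
Qed.

Lemma kappa_fin_universal v z : v != z -> universal z -> kappa_fin v z = #|nbh v|.
Proof. by move=> vz univ; apply/anti_leq; rewrite kappa_fin_leq_deg // deg_leq_kappa_fin. Qed.

Lemma resolving_of_universal z (W : {set G}) : z \in W -> universal z ->
  {in [predC W] &, injective (fun v => #|nbh v|)} -> resolving W.
Proof.
move=> zW univ deg_inj v1 v2 kappaE.
have [v1W|v1W] := boolP (v1 \in W).
  by apply/esym/eqP; rewrite -kappa_eq_None -kappaE // kappa_eq_None.
have [v2W|v2W] := boolP (v2 \in W).
  by apply/eqP; rewrite -kappa_eq_None kappaE // kappa_eq_None.
have neq_z v : v \notin W -> v != z by apply: contraNneq => ->.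
move: (kappaE z zW); rewrite /kappa !ifN ?neq_z // => -[].
by rewrite !kappa_fin_universal ?neq_z //; apply: deg_inj.
Qed.

Lemma kappa_edgeless v w : (forall x y, ~~ adj x y) -> v != w -> kappa v w = Some 0.
Proof.
move=> noedge vw; rewrite /kappa ifN //; congr Some; apply/eqP.
rewrite -leqn0 (leq_trans (kappa_fin_leq_deg vw)) // leqn0 cards_eq0.
by apply/eqP/setP => x; rewrite !inE (negbTE (noedge _ _)).
Qed.

Lemma edgeless_cdim : (forall x y, ~~ adj x y) -> #|G|.-1 <= cdim G.
Proof.
move=> noedge; apply: leq_cdim => [|W resW]; first exact: leq_pred.
rewrite leqNgt; apply/negP => small.
have : 1 < #|~: W| by have := cardsC W; lia.
case/card_gt1P => x [y [xW yW xy]]; move: xW yW; rewrite !inE => xW yW.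
suff /eqP : x = y by rewrite (negbTE xy).
apply: resW => w wW; rewrite !kappa_edgeless //.
  by apply: contraNneq yW => ->.
by apply: contraNneq xW => ->.
Qed.

End Connectivity.

Lemma card_ord_gt0 n : 0 < #|'I_n.+1|.
Proof. by rewrite card_ord. Qed.

Definition edgeless n :=
  @SGraph 'I_n.+1 (fun _ _ => false) (fun _ _ => erefl) (fun _ => erefl)
    (card_ord_gt0 n).

Lemma cdim_edgeless n : n <= cdim (edgeless n).
Proof. by have := @edgeless_cdim (edgeless n) (fun _ _ => isT); rewrite card_ord. Qed.

Definition threshold_adj k (i j : 'I_(k + k).+1) : bool :=
  (i != j) && [|| i == 0 :> nat, j == 0 :> nat | k + k < i + j].

Lemma threshold_adj_sym k : symmetric (@threshold_adj k).
Proof. by move=> i j; rewrite /threshold_adj eq_sym addnC orbCA. Qed.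

Lemma threshold_adj_irr k : irreflexive (@threshold_adj k).
Proof. by move=> i; rewrite /threshold_adj eqxx. Qed.

Definition threshold_graph k :=
  @SGraph 'I_(k + k).+1 _ (@threshold_adj_sym k) (@threshold_adj_irr k)
    (card_ord_gt0 (k + k)).

Lemma threshold_universal0 k : universal (ord0 : threshold_graph k).
Proof. by move=> x x0; rewrite /= /threshold_adj x0 orbT andbT. Qed.

Lemma threshold_deg k (i : threshold_graph k) :
  (i : nat) != 0 -> #|nbh i| + (k < i) = i.+1.
Proof.
move=> i0; pose T := [set j : 'I_(k + k).+1 | k + k < i + j].
have nbhE : nbh i = (ord0 |: T) :\ i.
  by apply/setP => j; rewrite !inE /= /threshold_adj (negbTE i0) /= eq_sym.
have cardT : #|T| = i.
  by rewrite (card_ord_count _ (fun j => k + k < i + j)) count_iota_sum_gt // ltnW.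
have T0 : ord0 \notin T by rewrite inE addn0 -leqNgt -ltnS.
have iT : (i \in ord0 |: T) = (k < i).
  by rewrite !inE -val_eqE (negbTE i0) /=; apply/idP/idP; lia.
by rewrite nbhE -iT addnC -cardsD1 cardsU1 T0 cardT.
Qed.

Lemma cdim_threshold k : cdim (threshold_graph k.+1) <= 2.
Proof.
pose z : threshold_graph k.+1 := ord0.
pose y : threshold_graph k.+1 := inord k.+2.
suff resW : resolving [set z; y].
  by apply: leq_trans (cdim_leq resW) _; rewrite cards2 ltnS leq_b1.
apply: (@resolving_of_universal _ z); [exact: setU11 | exact: threshold_universal0 |].
move=> a b; rewrite !inE !negb_or => /andP [az ay] /andP [bz byy] degE.
have val_neq (v : threshold_graph k.+1) (n : nat) (u : threshold_graph k.+1) :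
    v != u -> (u : nat) = n -> (v : nat) != n.
  by move=> vu <-; rewrite val_eqE.
have y_val : (y : nat) = k.+2 by rewrite inordK //; lia.
have a0 := val_neq _ _ _ az erefl; have b0 := val_neq _ _ _ bz erefl.
have ak := val_neq _ _ _ ay y_val; have bk := val_neq _ _ _ byy y_val.
have := threshold_deg a0; have := threshold_deg b0; rewrite degE => da db.
apply: val_inj; move: da db a0 b0 ak bk.
by case: ltnP => ha; case: ltnP => hb /=; lia.
Qed.

Lemma edgeless_induced_threshold n : induced_sub (edgeless n) (threshold_graph n.+1).
Proof.
have lt_succ (i : 'I_n.+1) : i.+1 < (n.+1 + n.+1).+1 by have := ltn_ord i; lia.
exists (fun i : edgeless n => inord i.+1 : threshold_graph n.+1); split.
  by move=> i j /(congr1 val); rewrite /= !inordK // => -[] /val_inj.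
move=> i j; rewrite /= /threshold_adj !inordK //.
by have := ltn_ord i; have := ltn_ord j; rewrite /=; case: eqP => //= _; lia.
Qed.

Lemma Rdiv_le_of_lt (a c b eps : R) :
  (0 < eps -> 0 <= a -> a <= c -> c / eps < b -> a / b <= eps)%R.
Proof.
move=> eps0 a0 ac cb.
have ce : (c / eps * eps = c)%R by field; lra.
have b0 : (0 < b)%R by nra.
have ab : (a / b * b = a)%R by field; lra.
nra.
Qed.

Theorem mainTheorem6 :
  forall eps : R, (0 < eps)%R ->
  exists (G H : sgraph), induced_sub H G /\ 0 < cdim H /\
    (INR (cdim G) / INR (cdim H) <= eps)%R.
Proof.
move=> eps eps0; have [N NE] := INR_unbounded (2 / eps).
exists (threshold_graph N.+2), (edgeless N.+1).
have cdimH := cdim_edgeless N.+1; have cdimG := cdim_threshold N.+1.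
split; first exact: edgeless_induced_threshold.
split; first exact: leq_trans cdimH.
apply: (@Rdiv_le_of_lt _ 2) => //; first exact: pos_INR.
  by have /= := le_INR _ _ (leP cdimG); lra.
by apply: (Rlt_le_trans _ (INR N)) => //; apply/le_INR/leP/ltnW.
Qed.
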